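(* Let $\lambda>0$, $\gamma>0$, $\beta\ge 0$. Let $X$ be the Banach space of bounded analytic functions $h:[0,\lambda]\to\mathbb{R}$ with the supremum norm, $K=\{h\in X: h\ge 0,\ \|h\|_\infty\le 1\}$, and for $h\in K$ let $\Psi_h=1+\beta h$, $$D_h=\gamma\left(1+\gamma\int_0^\lambda\frac{\exp\left(-2\int_0^x\frac{\xi}{\Psi_h(\xi)}d\xi\right)}{\Psi_h(x)}\,dx\right)^{-1},$$ and $$(\tau h)(\eta)=D_h\left(\frac1\gamma+\int_0^\eta\frac{\exp\left(-2\int_0^x\frac{\xi}{\Psi_h(\xi)}d\xi\right)}{\Psi_h(x)}\,dx\right),\quad 0<\eta<\lambda.$$ Then $\tau(K)\subset K$. *)

From Stdlib Require Import Reals.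
From Coquelicot Require Import Coquelicot.
Open Scope R_scope.

Definition analytic_on (a b : R) (f : R -> R) : Prop :=
  forall x0, a <= x0 <= b ->
    exists (c : nat -> R) (r : R), 0 < r /\
      forall x, a <= x <= b -> Rabs (x - x0) < r -> is_pseries c (x - x0) (f x).

(* Membership in X: bounded analytic functions on [0, lambda]
   (a function R -> R whose values off [0,lambda] are irrelevant). *)
Definition in_X (lambda : R) (h : R -> R) : Prop :=
  analytic_on 0 lambda h /\
  exists M, forall x, 0 <= x <= lambda -> Rabs (h x) <= M.

Definition in_K (lambda : R) (h : R -> R) : Prop :=
  in_X lambda h /\ forall x, 0 <= x <= lambda -> 0 <= h x <= 1.

Definition Psi (beta : R) (h : R -> R) (x : R) : R := 1 + beta * h x.

Definition integrand (beta : R) (h : R -> R) (x : R) : R :=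
  exp (-2 * RInt (fun xi => xi / Psi beta h xi) 0 x) / Psi beta h x.

Definition D_h (lambda gamma beta : R) (h : R -> R) : R :=
  gamma / (1 + gamma * RInt (integrand beta h) 0 lambda).

Definition tau (lambda gamma beta : R) (h : R -> R) (eta : R) : R :=
  D_h lambda gamma beta h * (1 / gamma + RInt (integrand beta h) 0 eta).

From Stdlib Require Import Reals Lra Lia Classical.
From Coquelicot Require Import Coquelicot.
Open Scope R_scope.

(* Since Psi_h > 0 the integrand is positive, so 0 <= I(eta) <= I(lambda) for
   I(eta) = int_0^eta, and (tau h)(eta) = (1 + gamma I(eta)) / (1 + gamma I(lambda))
   lies in [0, 1].  Analyticity of tau h follows from the closure of real-analytic
   functions on an interval under sums, products, reciprocals of non-vanishing
   functions, exp and antiderivatives.  The coefficients of 1/f and exp f are given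
   by convolution recursions, whose radius of convergence is controlled by a
   geometric majorant; exp f is then identified through the linear ODE y' = f' y. *)

Lemma CV_radius_ge_of_bounded (c : nat -> R) (r : R) :
  (exists M, forall n, Rabs (c n * r ^ n) <= M) -> Rbar_le r (CV_radius c).
Proof. intro Hc. apply (proj1 (CV_radius_bounded c)), Hc. Qed.

Lemma bounded_of_lt_CV_radius (c : nat -> R) (r : R) :
  0 <= r -> Rbar_lt r (CV_radius c) -> exists M, forall n, Rabs (c n * r ^ n) <= M.
Proof.
  intros Hr Hlt. apply NNPP. intro Hunb.
  assert (Hub : is_ub_Rbar (fun s => exists M, forall n, Rabs (c n * s ^ n) <= M) r).
  { intros s [M HM]. simpl. destruct (Rle_dec s r) as [Hsr|Hsr]; [exact Hsr|].
    exfalso. apply Hunb. exists M. intro n. eapply Rle_trans; [|apply (HM n)].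
    rewrite !Rabs_mult. apply Rmult_le_compat_l; [apply Rabs_pos|].
    rewrite !Rabs_pos_eq by (apply pow_le; lra). apply pow_incr. lra. }
  apply (Rbar_le_not_lt _ _ (proj2 (CV_radius_bounded c) _ Hub) Hlt).
Qed.

Lemma CV_radius_ge_of_ex_pseries (c : nat -> R) (x : R) :
  ex_pseries c x -> Rbar_le (Rabs x) (CV_radius c).
Proof.
  intros [l Hl]. apply Rbar_not_lt_le. intro Hlt. apply (CV_disk_outside c x Hlt).
  apply ex_series_lim_0. exists l. apply is_pseries_R, Hl.
Qed.

Lemma Rabs_lt_CV_radius (c : nat -> R) (r x : R) :
  Rabs x < r -> Rbar_le r (CV_radius c) -> Rbar_lt (Rabs x) (CV_radius c).
Proof. intros Hx Hr. eapply Rbar_lt_le_trans; [|exact Hr]. exact Hx. Qed.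

Lemma Rbar_lt_0_real_below (l : Rbar) : Rbar_lt 0 l -> exists r, 0 < r /\ Rbar_lt r l.
Proof.
  destruct l as [l| |]; simpl; intro Hl; try contradiction.
  - exists (l / 2). split; lra.
  - exists 1. split; [lra | exact I].
Qed.

Lemma CV_radius_plus_ge (c d : nat -> R) (r : R) :
  Rbar_le r (CV_radius c) -> Rbar_le r (CV_radius d) -> Rbar_le r (CV_radius (PS_plus c d)).
Proof.
  intros Hc Hd. eapply Rbar_le_trans; [|apply CV_radius_plus].
  apply (Rbar_min_case _ _ (Rbar_le r)); assumption.
Qed.

Definition PS_cst (k : R) (n : nat) : R := match n with O => k | S _ => 0 end.

Lemma is_pseries_cst (k x : R) : is_pseries (PS_cst k) x k.
Proof.
  apply is_pseries_R. apply filterlim_ext with (fun _ => k); [|apply filterlim_const].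
  intro n. induction n as [|n IH].
  - rewrite sum_O. simpl. ring.
  - rewrite sum_Sn, <- IH. simpl. unfold plus; simpl. ring.
Qed.

Lemma PSeries_cst (k x : R) : PSeries (PS_cst k) x = k.
Proof. apply is_pseries_unique, is_pseries_cst. Qed.

Lemma CV_radius_cst (k r : R) : Rbar_le r (CV_radius (PS_cst k)).
Proof.
  apply CV_radius_ge_of_bounded. exists (Rabs k). intros [|n]; simpl.
  - rewrite Rmult_1_r. lra.
  - rewrite Rmult_0_l, Rabs_R0. apply Rabs_pos.
Qed.

Lemma RInt_PSeries_shift (c : nat -> R) (x0 x : R) :
  Rbar_lt (Rabs (x - x0)) (CV_radius c) ->
  RInt (fun t => PSeries c (t - x0)) x0 x = PSeries (PS_Int c) (x - x0).
Proof.
  intro Hx. rewrite <- RInt_PSeries by exact Hx.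
  replace 0 with (1 * x0 + - x0) by ring. replace (x - x0) with (1 * x + - x0) by ring.
  rewrite <- (RInt_comp_lin (V := R_CompleteNormedModule)).
  - apply RInt_ext. intros t _. unfold scal; simpl; unfold mult; simpl.
    rewrite Rmult_1_l. f_equal; ring.
  - replace (1 * x0 + - x0) with 0 by ring. replace (1 * x + - x0) with (x - x0) by ring.
    apply ex_RInt_PSeries, Hx.
Qed.

(* [strong_rec_table b0 step n] agrees with the sequence on [0 .. n]; this
   realizes a recursion [u (S m) = step m u] whose step reads all of [u 0 .. u m]. *)
Fixpoint strong_rec_table (b0 : R) (step : nat -> (nat -> R) -> R) (n : nat) : nat -> R :=
  match n with
  | O => fun _ => b0
  | S m => fun k => if Nat.leb k m then strong_rec_table b0 step m k
                    else step m (strong_rec_table b0 step m)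
  end.

Definition strong_rec b0 step (n : nat) : R := strong_rec_table b0 step n n.

Lemma strong_rec_table_le b0 step n k :
  (k <= n)%nat -> strong_rec_table b0 step n k = strong_rec b0 step k.
Proof.
  induction n as [|m IH]; intro Hk.
  - replace k with O by lia. reflexivity.
  - cbn [strong_rec_table]. destruct (Nat.leb k m) eqn:E.
    + apply IH, Nat.leb_le, E.
    + apply Nat.leb_gt in E. replace k with (S m) by lia.
      unfold strong_rec. cbn [strong_rec_table]. rewrite (proj2 (Nat.leb_gt (S m) m)) by lia. reflexivity.
Qed.

Lemma strong_rec_S b0 step :
  (forall m p q, (forall k, (k <= m)%nat -> p k = q k) -> step m p = step m q) ->
  forall m, strong_rec b0 step (S m) = step m (strong_rec b0 step).
Proof.
  intros Hstep m. unfold strong_rec at 1. cbn [strong_rec_table].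
  rewrite (proj2 (Nat.leb_gt (S m) m)) by lia.
  apply Hstep. intros k Hk. apply strong_rec_table_le, Hk.
Qed.

Lemma sum_geom_half_le_2 n : sum_f_R0 (fun k => (/ 2) ^ k) n <= 2.
Proof.
  assert (Hsum : sum_f_R0 (fun k => (/ 2) ^ k) n = 2 - (/ 2) ^ n).
  { induction n as [|n IH]; simpl; [lra|]. rewrite IH. lra. }
  rewrite Hsum. assert (0 < (/ 2) ^ n) by (apply pow_lt; lra). lra.
Qed.

Section ConvolutionRecursion.

Variables (w b : nat -> R) (al : R).
Hypothesis Hal : 0 <= al.
Hypothesis Hrec : forall n,
  Rabs (b (S n)) <= al * sum_f_R0 (fun k => Rabs (w k) * Rabs (b (n - k)%nat)) n.

(* Induction on [n] with the majorant [|b 0| s^-n]: the convolution of the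
   geometric bound [W 2^-k] on [w] costs a factor [2 W], absorbed by [al s]. *)
Lemma convolution_rec_geometric_bound (s W : R) :
  0 < s -> 2 * al * W * s <= 1 -> (forall k, Rabs (w k) * s ^ k <= W * (/ 2) ^ k) ->
  forall n, Rabs (b n) * s ^ n <= Rabs (b O).
Proof.
  intros Hs HWs Hw.
  assert (HW : 0 <= W).
  { specialize (Hw O). simpl in Hw. pose proof (Rabs_pos (w O)). lra. }
  set (B := Rabs (b O)). assert (HB : 0 <= B) by apply Rabs_pos.
  assert (Hall : forall n j, (j <= n)%nat -> Rabs (b j) * s ^ j <= B).
  2: { intro n. apply (Hall n n). lia. }
  induction n as [|n IH]; intros j Hj.
  { replace j with O by lia. simpl. unfold B. lra. }
  destruct (Nat.le_gt_cases j n) as [Hjn|Hjn]; [apply IH, Hjn|].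
  replace j with (S n) by lia.
  assert (Hterm : forall k, (k <= n)%nat ->
    Rabs (w k) * Rabs (b (n - k)%nat) * s ^ S n <= W * (/ 2) ^ k * B * s).
  { intros k Hk.
    replace (Rabs (w k) * Rabs (b (n - k)%nat) * s ^ S n)
      with (Rabs (w k) * s ^ k * (Rabs (b (n - k)%nat) * s ^ (n - k)) * s).
    2: { replace (S n) with (S (k + (n - k))) by lia. simpl. rewrite pow_add. ring. }
    apply Rmult_le_compat_r; [lra|]. apply Rmult_le_compat; auto.
    - apply Rmult_le_pos; [apply Rabs_pos | apply pow_le; lra].
    - apply Rmult_le_pos; [apply Rabs_pos | apply pow_le; lra].
    - apply IH. lia. }
  assert (Hconv : sum_f_R0 (fun k => Rabs (w k) * Rabs (b (n - k)%nat)) n * s ^ S n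
                  <= W * B * s * sum_f_R0 (fun k => (/ 2) ^ k) n).
  { rewrite (Rmult_comm _ (s ^ S n)), !scal_sum. apply sum_Rle. intros k Hk.
    specialize (Hterm k Hk). lra. }
  pose proof (sum_geom_half_le_2 n).
  assert (0 <= W * B * s) by (repeat apply Rmult_le_pos; lra).
  apply Rle_trans with (al * (sum_f_R0 (fun k => Rabs (w k) * Rabs (b (n - k)%nat)) n * s ^ S n)).
  - rewrite <- Rmult_assoc. apply Rmult_le_compat_r; [apply pow_le; lra | apply Hrec].
  - apply Rle_trans with (al * (W * B * s * 2)); [|nra].
    apply Rmult_le_compat_l; [exact Hal|]. nra.
Qed.

Lemma CV_radius_convolution_rec : Rbar_lt 0 (CV_radius w) -> Rbar_lt 0 (CV_radius b).
Proof.
  intro Hw. destruct (Rbar_lt_0_real_below _ Hw) as (rho & Hrho & Hrhow).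
  destruct (bounded_of_lt_CV_radius w rho) as [W HW]; [lra | exact Hrhow|].
  assert (HW0 : 0 <= W) by (eapply Rle_trans; [apply Rabs_pos | apply (HW O)]).
  set (s := Rmin (rho / 2) (/ (2 * al * W + 1))).
  assert (Hden : 0 < 2 * al * W + 1) by nra.
  assert (Hs : 0 < s) by (apply Rmin_glb_lt; [lra | apply Rinv_0_lt_compat; lra]).
  assert (Hsrho : s <= rho / 2) by apply Rmin_l.
  assert (HWs : 2 * al * W * s <= 1).
  { apply Rle_trans with ((2 * al * W) * / (2 * al * W + 1)).
    - apply Rmult_le_compat_l; [nra | apply Rmin_r].
    - apply Rmult_le_reg_r with (2 * al * W + 1); [lra|].
      rewrite Rmult_assoc, Rinv_l; lra. }
  assert (Hgeom : forall k, Rabs (w k) * s ^ k <= W * (/ 2) ^ k).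
  { intro k. specialize (HW k). rewrite Rabs_mult, (Rabs_pos_eq (rho ^ k)) in HW by (apply pow_le; lra).
    apply Rle_trans with (Rabs (w k) * rho ^ k * (/ 2) ^ k).
    - rewrite Rmult_assoc, <- Rpow_mult_distr. apply Rmult_le_compat_l; [apply Rabs_pos|].
      apply pow_incr. lra.
    - apply Rmult_le_compat_r; [apply pow_le; lra | exact HW]. }
  apply Rbar_lt_le_trans with s; [exact Hs|].
  apply CV_radius_ge_of_bounded. exists (Rabs (b O)). intro n.
  rewrite Rabs_mult, (Rabs_pos_eq (s ^ n)) by (apply pow_le; lra).
  apply (convolution_rec_geometric_bound s W); assumption.
Qed.

End ConvolutionRecursion.

Definition PS_inv (c : nat -> R) : nat -> R :=
  strong_rec (/ c O) (fun m d => - / c O * sum_f_R0 (fun k => c (S k) * d (m - k)%nat) m).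

Lemma PS_inv_S (c : nat -> R) (m : nat) :
  PS_inv c (S m) = - / c O * sum_f_R0 (fun k => c (S k) * PS_inv c (m - k)%nat) m.
Proof.
  apply strong_rec_S. intros m' p q Hpq. f_equal. apply sum_eq.
  intros k Hk. rewrite Hpq; [reflexivity | lia].
Qed.

Lemma PS_mult_inv (c : nat -> R) : c O <> 0 -> forall n, PS_mult c (PS_inv c) n = PS_cst 1 n.
Proof.
  intros Hc0 [|m]; unfold PS_mult.
  - simpl. unfold PS_inv, strong_rec. simpl. field. exact Hc0.
  - rewrite decomp_sum by lia. simpl pred. rewrite Nat.sub_0_r, PS_inv_S. simpl PS_cst.
    replace (sum_f_R0 (fun i => c (S i) * PS_inv c (S m - S i)%nat) m)
      with (sum_f_R0 (fun k => c (S k) * PS_inv c (m - k)%nat) m) by reflexivity.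
    field. exact Hc0.
Qed.

Lemma CV_radius_PS_inv (c : nat -> R) : Rbar_lt 0 (CV_radius c) -> Rbar_lt 0 (CV_radius (PS_inv c)).
Proof.
  intro Hc. apply (CV_radius_convolution_rec (PS_decr_1 c) _ (Rabs (/ c O))).
  - apply Rabs_pos.
  - intro n. rewrite PS_inv_S, Rabs_mult, Rabs_Ropp. apply Rmult_le_compat_l; [apply Rabs_pos|].
    eapply Rle_trans; [apply sum_f_R0_triangle|]. right. apply sum_eq. intros k _. apply Rabs_mult.
  - rewrite CV_radius_decr_1. exact Hc.
Qed.

Lemma PSeries_mult_inv (c : nat -> R) (x : R) :
  c O <> 0 -> Rbar_lt (Rabs x) (CV_radius c) -> Rbar_lt (Rabs x) (CV_radius (PS_inv c)) ->
  PSeries c x * PSeries (PS_inv c) x = 1.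
Proof.
  intros Hc0 Hc Hd. rewrite <- PSeries_mult by assumption.
  rewrite (PSeries_ext _ _ _ (PS_mult_inv c Hc0)). apply PSeries_cst.
Qed.

(* The recursion is the equation [e' = c' e] read on coefficients. *)
Definition PS_exp (c : nat -> R) : nat -> R :=
  strong_rec (exp (c O))
    (fun m e => / INR (S m) * sum_f_R0 (fun k => PS_derive c k * e (m - k)%nat) m).

Lemma PS_exp_S (c : nat -> R) (m : nat) :
  PS_exp c (S m) = / INR (S m) * sum_f_R0 (fun k => PS_derive c k * PS_exp c (m - k)%nat) m.
Proof.
  apply strong_rec_S. intros m' p q Hpq. f_equal. apply sum_eq.
  intros k Hk. rewrite Hpq; [reflexivity | lia].
Qed.

Lemma PS_derive_exp (c : nat -> R) (n : nat) :
  PS_derive (PS_exp c) n = PS_mult (PS_derive c) (PS_exp c) n.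
Proof.
  unfold PS_derive at 1. rewrite PS_exp_S. unfold PS_mult.
  field. apply not_0_INR. lia.
Qed.

Lemma CV_radius_PS_exp (c : nat -> R) : Rbar_lt 0 (CV_radius c) -> Rbar_lt 0 (CV_radius (PS_exp c)).
Proof.
  intro Hc. apply (CV_radius_convolution_rec (PS_derive c) _ 1); [lra| |].
  - intro n. rewrite PS_exp_S, Rabs_mult.
    assert (Hn : 0 < / INR (S n) <= 1).
    { assert (1 <= INR (S n)) by (rewrite S_INR; pose proof (pos_INR n); lra).
      split; [apply Rinv_0_lt_compat; lra|].
      rewrite <- Rinv_1. apply Rinv_le_contravar; lra. }
    rewrite Rabs_pos_eq by lra. apply Rmult_le_compat; try lra; [apply Rabs_pos|].
    eapply Rle_trans; [apply sum_f_R0_triangle|]. right. apply sum_eq. intros k _. apply Rabs_mult.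
  - rewrite CV_radius_derive. exact Hc.
Qed.

Lemma Rabs_le_between_0 (x t : R) : Rmin 0 x <= t <= Rmax 0 x -> Rabs t <= Rabs x.
Proof.
  unfold Rmin, Rmax, Rabs. destruct (Rle_dec 0 x); repeat destruct Rcase_abs; lra.
Qed.

(* [y exp(-p)] has zero derivative between [0] and [x]. *)
Lemma exp_of_linear_ode (y p dp : R -> R) (x : R) :
  (forall t, Rmin 0 x <= t <= Rmax 0 x -> is_derive y t (dp t * y t)) ->
  (forall t, Rmin 0 x <= t <= Rmax 0 x -> is_derive p t (dp t)) ->
  y 0 = exp (p 0) -> y x = exp (p x).
Proof.
  intros Hy Hp H0. set (H := fun t => y t * exp (- p t)).
  assert (HD : forall t, Rmin 0 x <= t <= Rmax 0 x -> is_derive H t 0).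
  { intros t Ht.
    pose proof (is_derive_comp exp (fun s => - p s) t _ _ (is_derive_exp _)
                  (is_derive_opp _ _ _ (Hp t Ht))) as De.
    pose proof (is_derive_mult _ _ t _ _ (Hy t Ht) De (fun u v => Rmult_comm u v)) as D.
    match type of D with is_derive _ _ ?l => replace 0 with l; [exact D|] end.
    unfold plus, mult, scal, opp; simpl. unfold mult, plus, opp; simpl. ring. }
  destruct (MVT_gen H 0 x (fun _ => 0)) as (t & _ & Ht).
  - intros t Ht. apply HD. lra.
  - intros t Ht. apply continuity_pt_filterlim, (ex_derive_continuous H t).
    exists 0. apply HD, Ht.
  - assert (H1 : H x = 1).
    { replace (H x) with (H 0) by lra. unfold H.
      rewrite H0, <- exp_plus, Rplus_opp_r. apply exp_0. }
    unfold H in H1. apply Rmult_eq_reg_r with (exp (- p x)); [|apply Rgt_not_eq, exp_pos].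
    rewrite H1, <- exp_plus, Rplus_opp_r, exp_0. reflexivity.
Qed.

Lemma PSeries_exp (c : nat -> R) (x : R) :
  Rbar_lt (Rabs x) (CV_radius c) -> Rbar_lt (Rabs x) (CV_radius (PS_exp c)) ->
  PSeries (PS_exp c) x = exp (PSeries c x).
Proof.
  intros Hc He.
  assert (Hin : forall t, Rmin 0 x <= t <= Rmax 0 x -> forall d : nat -> R,
            Rbar_lt (Rabs x) (CV_radius d) -> Rbar_lt (Rabs t) (CV_radius d)).
  { intros t Ht d Hd. eapply Rbar_le_lt_trans; [|exact Hd]. apply Rabs_le_between_0, Ht. }
  apply exp_of_linear_ode with (dp := PSeries (PS_derive c)).
  - intros t Ht. rewrite <- PSeries_mult.
    + rewrite <- (PSeries_ext _ _ _ (PS_derive_exp c)). apply is_derive_PSeries, Hin, He; exact Ht.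
    + apply Hin; [exact Ht|]. rewrite CV_radius_derive. exact Hc.
    + apply Hin; assumption.
  - intros t Ht. apply is_derive_PSeries, Hin; assumption.
  - rewrite !PSeries_0. reflexivity.
Qed.

Section LocallyPseries.

Variables a b : R.

(* Unlike [analytic_on], the radius of convergence is part of the data, so that
   the representing series converge on the whole disc [|x - x0| < r]. *)
Definition locally_pseries (f : R -> R) : Prop :=
  forall x0, a <= x0 <= b -> exists (c : nat -> R) (r : R), 0 < r /\ Rbar_le r (CV_radius c) /\
    forall x, a <= x <= b -> Rabs (x - x0) < r -> f x = PSeries c (x - x0).

Lemma locally_pseries_const (k : R) : locally_pseries (fun _ => k).
Proof.
  intros x0 _. exists (PS_cst k), 1. split; [lra | split; [apply CV_radius_cst|]].
  intros x _ _. symmetry. apply PSeries_cst.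
Qed.

Lemma locally_pseries_id : locally_pseries (fun x => x).
Proof.
  intros x0 _. exists (PS_plus (PS_cst x0) (PS_incr_1 (PS_cst 1))), 1. split; [lra|split].
  - apply CV_radius_plus_ge; [|rewrite CV_radius_incr_1]; apply CV_radius_cst.
  - intros x _ _. rewrite PSeries_plus, PSeries_incr_1, !PSeries_cst.
    + unfold plus; simpl. ring.
    + exists x0. apply is_pseries_cst.
    + eexists. apply is_pseries_incr_1, is_pseries_cst.
Qed.

Lemma locally_pseries_pair (f g : R -> R) (x0 : R) :
  locally_pseries f -> locally_pseries g -> a <= x0 <= b ->
  exists (c d : nat -> R) (r : R), 0 < r /\ Rbar_lt r (CV_radius c) /\ Rbar_lt r (CV_radius d) /\
    forall x, a <= x <= b -> Rabs (x - x0) < r ->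
      f x = PSeries c (x - x0) /\ g x = PSeries d (x - x0).
Proof.
  intros Hf Hg Hx0.
  destruct (Hf x0 Hx0) as (c & r1 & Hr1 & Hc & Ef). destruct (Hg x0 Hx0) as (d & r2 & Hr2 & Hd & Eg).
  pose proof (Rmin_l r1 r2). pose proof (Rmin_r r1 r2).
  assert (Hr : 0 < Rmin r1 r2) by (apply Rmin_glb_lt; assumption).
  exists c, d, (Rmin r1 r2 / 2). split; [lra|split; [|split]].
  - apply Rbar_lt_le_trans with r1; [simpl; lra | exact Hc].
  - apply Rbar_lt_le_trans with r2; [simpl; lra | exact Hd].
  - intros x Hx Hxr. split; [apply Ef | apply Eg]; auto; lra.
Qed.

Lemma locally_pseries_plus (f g : R -> R) :
  locally_pseries f -> locally_pseries g -> locally_pseries (fun x => f x + g x).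
Proof.
  intros Hf Hg x0 Hx0. destruct (locally_pseries_pair f g x0 Hf Hg Hx0) as (c & d & r & Hr & Hc & Hd & E).
  exists (PS_plus c d), r. split; [exact Hr|split].
  - apply CV_radius_plus_ge; apply Rbar_lt_le; assumption.
  - intros x Hx Hxr. destruct (E x Hx Hxr) as [-> ->]. symmetry. apply PSeries_plus;
      apply CV_radius_inside, (Rabs_lt_CV_radius _ r); auto; apply Rbar_lt_le; assumption.
Qed.

Lemma locally_pseries_mult (f g : R -> R) :
  locally_pseries f -> locally_pseries g -> locally_pseries (fun x => f x * g x).
Proof.
  intros Hf Hg x0 Hx0. destruct (locally_pseries_pair f g x0 Hf Hg Hx0) as (c & d & r & Hr & Hc & Hd & E).
  exists (PS_mult c d), r. split; [exact Hr|split].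
  - rewrite <- (Rabs_pos_eq r) by lra. apply CV_radius_ge_of_ex_pseries, ex_pseries_mult;
      rewrite Rabs_pos_eq by lra; assumption.
  - intros x Hx Hxr. destruct (E x Hx Hxr) as [-> ->]. symmetry. apply PSeries_mult;
      apply (Rabs_lt_CV_radius _ r); auto; apply Rbar_lt_le; assumption.
Qed.

Lemma locally_pseries_inv (f : R -> R) :
  locally_pseries f -> (forall x, a <= x <= b -> f x <> 0) -> locally_pseries (fun x => / f x).
Proof.
  intros Hf Hnz x0 Hx0. destruct (Hf x0 Hx0) as (c & r & Hr & Hc & Ef).
  assert (Hc0 : c O <> 0).
  { assert (E0 := Ef x0 Hx0). rewrite Rminus_diag, Rabs_R0, PSeries_0 in E0.
    rewrite <- (E0 Hr). apply Hnz, Hx0. }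
  destruct (Rbar_lt_0_real_below _ (CV_radius_PS_inv c (Rbar_lt_le_trans 0 r _ Hr Hc)))
    as (s & Hs & Hsd).
  pose proof (Rmin_l r s). pose proof (Rmin_r r s).
  exists (PS_inv c), (Rmin r s). split; [apply Rmin_glb_lt; assumption|split].
  - apply Rbar_le_trans with s; [simpl; lra | apply Rbar_lt_le, Hsd].
  - intros x Hx Hxr. rewrite (Ef x Hx) by lra.
    assert (Hp : PSeries c (x - x0) * PSeries (PS_inv c) (x - x0) = 1).
    { apply PSeries_mult_inv; [exact Hc0 | apply (Rabs_lt_CV_radius _ r); auto; lra |].
      apply (Rabs_lt_CV_radius _ s); [lra | apply Rbar_lt_le, Hsd]. }
    assert (Hp0 : PSeries c (x - x0) <> 0) by (intro Z; rewrite Z, Rmult_0_l in Hp; lra).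
    apply Rmult_eq_reg_l with (PSeries c (x - x0)); [|exact Hp0].
    rewrite Hp. field. exact Hp0.
Qed.

Lemma locally_pseries_exp (f : R -> R) : locally_pseries f -> locally_pseries (fun x => exp (f x)).
Proof.
  intros Hf x0 Hx0. destruct (Hf x0 Hx0) as (c & r & Hr & Hc & Ef).
  destruct (Rbar_lt_0_real_below _ (CV_radius_PS_exp c (Rbar_lt_le_trans 0 r _ Hr Hc)))
    as (s & Hs & Hse).
  pose proof (Rmin_l r s). pose proof (Rmin_r r s).
  exists (PS_exp c), (Rmin r s). split; [apply Rmin_glb_lt; assumption|split].
  - apply Rbar_le_trans with s; [simpl; lra | apply Rbar_lt_le, Hse].
  - intros x Hx Hxr. rewrite (Ef x Hx) by lra. symmetry. apply PSeries_exp.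
    + apply (Rabs_lt_CV_radius _ r); auto; lra.
    + apply (Rabs_lt_CV_radius _ s); [lra | apply Rbar_lt_le, Hse].
Qed.

Lemma analytic_on_locally_pseries (f : R -> R) : locally_pseries f -> analytic_on a b f.
Proof.
  intros Hf x0 Hx0. destruct (Hf x0 Hx0) as (c & r & Hr & Hc & Ef).
  exists c, r. split; [exact Hr|]. intros x Hx Hxr. rewrite (Ef x Hx Hxr).
  apply PSeries_correct, CV_radius_inside, (Rabs_lt_CV_radius _ r); assumption.
Qed.

(* The radius [y0] is certified by convergence of the series at a point of
   [[a, b]] at distance [y0] from [x0], which exists because [b - a >= 2 y0]. *)
Lemma locally_pseries_analytic_on (f : R -> R) : a < b -> analytic_on a b f -> locally_pseries f.
Proof.
  intros Hab Hf x0 Hx0. destruct (Hf x0 Hx0) as (c & r & Hr & Ef).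
  set (y0 := Rmin r (b - a) / 2).
  pose proof (Rmin_l r (b - a)). pose proof (Rmin_r r (b - a)).
  assert (Hy0 : 0 < y0) by (unfold y0; pose proof (Rmin_glb_lt r (b - a) 0 Hr ltac:(lra)); lra).
  assert (Hx1 : exists x1, a <= x1 <= b /\ Rabs (x1 - x0) = y0).
  { destruct (Rle_dec (x0 + y0) b).
    - exists (x0 + y0). split; [unfold y0 in *; lra|]. rewrite Rabs_pos_eq; lra.
    - exists (x0 - y0). split; [unfold y0 in *; lra|]. rewrite Rabs_left; lra. }
  destruct Hx1 as (x1 & Hx1 & Hd).
  exists c, y0. split; [exact Hy0|split].
  - rewrite <- Hd. apply CV_radius_ge_of_ex_pseries. exists (f x1). apply Ef; [exact Hx1|].
    unfold y0 in *; lra.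
  - intros x Hx Hxr. symmetry. apply is_pseries_unique, Ef; [exact Hx|]. unfold y0 in *; lra.
Qed.

Hypothesis Hab : a <= b.

Definition clamp (x : R) : R := Rmax a (Rmin b x).

Lemma clamp_in (x : R) : a <= clamp x <= b.
Proof. unfold clamp, Rmax, Rmin. repeat destruct Rle_dec; lra. Qed.

Lemma clamp_id (x : R) : a <= x <= b -> clamp x = x.
Proof. unfold clamp, Rmax, Rmin. repeat destruct Rle_dec; lra. Qed.

Lemma clamp_dist (x y : R) : Rabs (clamp y - clamp x) <= Rabs (y - x).
Proof. unfold clamp, Rmax, Rmin, Rabs. repeat destruct Rle_dec; repeat destruct Rcase_abs; lra. Qed.

Lemma continuous_clamp (x : R) : continuous clamp x.
Proof.
  apply filterlim_locally. intro eps. exists eps. intros y Hy.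
  apply Rle_lt_trans with (1 := clamp_dist x y), Hy.
Qed.

Lemma locally_pseries_continuous_clamp (f : R -> R) :
  locally_pseries f -> forall x, continuous (fun y => f (clamp y)) x.
Proof.
  intros Hf x. destruct (Hf (clamp x) (clamp_in x)) as (c & r & Hr & Hc & Ef).
  apply continuous_ext_loc with (fun y => PSeries c (clamp y - clamp x)).
  - exists (mkposreal r Hr). intros y Hy. symmetry. apply Ef; [apply clamp_in|].
    apply Rle_lt_trans with (1 := clamp_dist x y), Hy.
  - apply (continuous_comp (fun y => clamp y - clamp x) (PSeries c)).
    + apply (continuous_minus clamp (fun _ => clamp x)); [apply continuous_clamp | apply continuous_const].
    + rewrite Rminus_diag. apply continuity_pt_filterlim, PSeries_continuity.
      rewrite Rabs_R0. apply Rbar_lt_le_trans with r; [exact Hr | exact Hc].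
Qed.

Lemma locally_pseries_ex_RInt (f : R -> R) (x y : R) :
  locally_pseries f -> a <= x <= b -> a <= y <= b -> ex_RInt f x y.
Proof.
  intros Hf Hx Hy. apply (ex_RInt_ext (fun t => f (clamp t))).
  - intros t Ht. rewrite clamp_id; [reflexivity|].
    unfold Rmin, Rmax in Ht. destruct Rle_dec in Ht; lra.
  - apply (ex_RInt_continuous (V := R_CompleteNormedModule)). intros t _.
    apply locally_pseries_continuous_clamp, Hf.
Qed.

Lemma locally_pseries_RInt (f : R -> R) : locally_pseries f -> locally_pseries (fun x => RInt f a x).
Proof.
  intros Hf x0 Hx0. destruct (Hf x0 Hx0) as (c & r & Hr & Hc & Ef).
  exists (PS_plus (PS_cst (RInt f a x0)) (PS_Int c)), r. split; [exact Hr|split].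
  - apply CV_radius_plus_ge; [apply CV_radius_cst | rewrite CV_radius_Int; exact Hc].
  - intros x Hx Hxr. assert (Ha : a <= a <= b) by lra.
    assert (Hxc : Rbar_lt (Rabs (x - x0)) (CV_radius c)) by (apply (Rabs_lt_CV_radius _ r); assumption).
    rewrite <- (RInt_Chasles f a x0 x) by (apply locally_pseries_ex_RInt; assumption).
    rewrite PSeries_plus, PSeries_cst.
    + unfold plus; simpl. f_equal. rewrite <- RInt_PSeries_shift by exact Hxc.
      apply RInt_ext. intros t Ht. apply Ef.
      * unfold Rmin, Rmax in Ht. destruct Rle_dec in Ht; lra.
      * unfold Rmin, Rmax, Rabs in *. destruct Rle_dec in Ht; repeat destruct Rcase_abs; lra.
    + exists (RInt f a x0). apply is_pseries_cst.
    + apply CV_radius_inside. rewrite CV_radius_Int. exact Hxc.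
Qed.

End LocallyPseries.

Lemma Psi_pos (beta : R) (h : R -> R) (x : R) : 0 <= beta -> 0 <= h x -> 0 < Psi beta h x.
Proof. intros Hbeta Hh. unfold Psi. pose proof (Rmult_le_pos _ _ Hbeta Hh). lra. Qed.

Lemma integrand_pos (beta : R) (h : R -> R) (x : R) : 0 < Psi beta h x -> 0 < integrand beta h x.
Proof. intro Hpsi. apply Rdiv_lt_0_compat; [apply exp_pos | exact Hpsi]. Qed.

Lemma integrand_locally_pseries (lambda beta : R) (h : R -> R) :
  0 <= lambda -> locally_pseries 0 lambda h -> (forall x, 0 <= x <= lambda -> 0 < Psi beta h x) ->
  locally_pseries 0 lambda (integrand beta h).
Proof.
  intros Hl Hh Hpsi.
  assert (HPsi : locally_pseries 0 lambda (Psi beta h)).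
  { exact (locally_pseries_plus _ _ _ _ (locally_pseries_const _ _ 1)
             (locally_pseries_mult _ _ _ _ (locally_pseries_const _ _ beta) Hh)). }
  assert (Hinv := locally_pseries_inv _ _ _ HPsi (fun x Hx => Rgt_not_eq _ _ (Hpsi x Hx))).
  assert (Hrate := locally_pseries_mult _ _ _ _ (locally_pseries_id 0 lambda) Hinv).
  assert (Hexp := locally_pseries_exp _ _ _ (locally_pseries_mult _ _ _ _
                    (locally_pseries_const _ _ (-2)) (locally_pseries_RInt _ _ Hl _ Hrate))).
  exact (locally_pseries_mult _ _ _ _ Hexp Hinv).
Qed.

Lemma tau_locally_pseries (lambda gamma beta : R) (h : R -> R) :
  0 <= lambda -> locally_pseries 0 lambda (integrand beta h) ->
  locally_pseries 0 lambda (tau lambda gamma beta h).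
Proof.
  intros Hl HI.
  exact (locally_pseries_mult _ _ _ _ (locally_pseries_const _ _ _)
           (locally_pseries_plus _ _ _ _ (locally_pseries_const _ _ _)
              (locally_pseries_RInt _ _ Hl _ HI))).
Qed.

Lemma RInt_nonneg_le (f : R -> R) (a b x : R) :
  a <= x <= b -> ex_RInt f a x -> ex_RInt f x b -> (forall t, a <= t <= b -> 0 <= f t) ->
  0 <= RInt f a x <= RInt f a b.
Proof.
  intros Hx Hax Hxb Hf. rewrite <- (RInt_Chasles f a x b Hax Hxb). unfold plus; simpl.
  assert (0 <= RInt f a x) by (apply RInt_ge_0; [lra | exact Hax | intros t Ht; apply Hf; lra]).
  assert (0 <= RInt f x b) by (apply RInt_ge_0; [lra | exact Hxb | intros t Ht; apply Hf; lra]).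
  lra.
Qed.

Lemma affine_ratio_le_1 (g A B : R) : 0 < g -> 0 <= B <= A -> 0 <= g / (1 + g * A) * (1 / g + B) <= 1.
Proof.
  intros Hg HBA.
  assert (0 <= g * B <= g * A) by (split; [apply Rmult_le_pos | apply Rmult_le_compat_l]; lra).
  replace (g / (1 + g * A) * (1 / g + B)) with ((1 + g * B) / (1 + g * A)) by (field; lra).
  split.
  - apply Rdiv_le_0_compat; lra.
  - apply Rmult_le_reg_r with (1 + g * A); [lra|]. unfold Rdiv. rewrite Rmult_assoc, Rinv_l; lra.
Qed.

Lemma tau_unit_interval (lambda gamma beta : R) (h : R -> R) :
  0 < gamma -> 0 <= lambda -> locally_pseries 0 lambda (integrand beta h) ->
  (forall x, 0 <= x <= lambda -> 0 <= integrand beta h x) ->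
  forall x, 0 <= x <= lambda -> 0 <= tau lambda gamma beta h x <= 1.
Proof.
  intros Hg Hl HI Hpos x Hx. apply affine_ratio_le_1; [exact Hg|].
  apply RInt_nonneg_le; [exact Hx | | | exact Hpos]; apply (locally_pseries_ex_RInt 0 lambda); auto; lra.
Qed.

Theorem theorem3p3 (lambda gamma beta : R)
  (Hlambda : 0 < lambda) (Hgamma : 0 < gamma) (Hbeta : 0 <= beta)
  (h : R -> R) (Hh : in_K lambda h) :
  in_K lambda (tau lambda gamma beta h).
Proof.
  destruct Hh as [[Han _] Hrange].
  assert (Hl : 0 <= lambda) by lra.
  assert (Hpsi : forall x, 0 <= x <= lambda -> 0 < Psi beta h x)
    by (intros x Hx; apply Psi_pos; [exact Hbeta | apply Hrange, Hx]).
  assert (HI : locally_pseries 0 lambda (integrand beta h))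
    by (apply integrand_locally_pseries; [exact Hl | apply locally_pseries_analytic_on; assumption | exact Hpsi]).
  assert (Htau : forall x, 0 <= x <= lambda -> 0 <= tau lambda gamma beta h x <= 1).
  { apply tau_unit_interval; [exact Hgamma | exact Hl | exact HI |].
    intros x Hx. apply Rlt_le, integrand_pos, Hpsi, Hx. }
  split; [split | exact Htau].
  - apply analytic_on_locally_pseries, tau_locally_pseries; assumption.
  - exists 1. intros x Hx. specialize (Htau x Hx). rewrite Rabs_pos_eq; lra.
Qed.
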